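(* Let $x\in S_n$ avoid $123$. Then $x$ avoids the bivincular pattern $132^{\star}$ if and only if $|C_{i,j}|\le 1$ for all cells $C_{i,j}$ of the grid decomposition of $x$.
   Context: An occurrence of $132^{\star}$ in $x$ is a pair of indices $a<b<n$ with $x_a<x_{b+1}$ and $x_b=x_{b+1}+1$. Let $m_1,\dots,m_k$ be the left-to-right minima of $x$ (entries smaller than every entry to their left), in order, and write $x=m_1B_1m_2B_2\cdots m_kB_k$, where $B_j$ is the (possibly empty) set of entries strictly between $m_j$ and $m_{j+1}$ in position ($B_k$: the entries after $m_k$). Set $m_0=+\infty$ and $H_i=\{y\in[n]: m_i<y<m_{i-1}\}$ for $1\le i\le k$. The cell $C_{i,j}$ is $H_i\cap B_j$, the set of entries of $B_j$ whose values lie in $H_i$. *)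

(* Permutations x in S_n are represented as x : 'S_n, i.e.
   bijections of 'I_n = {0,...,n-1}; positions and values are shifted by one
   relative to the paper ([n] = {1,...,n}), which is harmless since all notions
   below only use order comparisons and the "+1" difference of values. *)
From mathcomp Require Import all_boot all_order all_fingroup.
Set Implicit Arguments. Unset Strict Implicit. Unset Printing Implicit Defensive.

Definition avoids123 n (x : 'S_n) : Prop :=
  ~ exists i j k : 'I_n, [/\ i < j, j < k, x i < x j & x j < x k].

(* occurrence of the bivincular pattern 132^star: a < b < n (1-indexed),
   x_a < x_{b+1}, x_b = x_{b+1} + 1.  0-indexed: c = b+1 is a position. *)
Definition occ132star n (x : 'S_n) (a b : 'I_n) : Prop :=
  exists c : 'I_n, [/\ a < b, val c = (val b).+1, x a < x c &
                       val (x b) = (val (x c)).+1].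

Definition avoids132star n (x : 'S_n) : Prop :=
  forall a b : 'I_n, ~ occ132star x a b.

Definition is_lrmin n (x : 'S_n) (p : 'I_n) : bool :=
  [forall q : 'I_n, (q < p) ==> (x p < x q)].

Definition lrmin_pos n (x : 'S_n) : seq nat :=
  [seq val p | p <- enum 'I_n & is_lrmin x p].

Definition lrmin_val n (x : 'S_n) : seq nat :=
  [seq val (x p) | p <- enum 'I_n & is_lrmin x p].

Definition nb_lrmin n (x : 'S_n) : nat := size (lrmin_pos x).

(* B_j (j 0-indexed): positions strictly between m_j and m_{j+1}
   (for the last one: all positions after m_k) *)
Definition Bblock n (x : 'S_n) (j : nat) : {set 'I_n} :=
  [set r : 'I_n | (nth 0 (lrmin_pos x) j < r) &&
     (r < (if j.+1 < nb_lrmin x then nth 0 (lrmin_pos x) j.+1 else n))].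

(* H_i (i 0-indexed): positions whose value lies strictly between m_i and
   m_{i-1}, with m_{-1} = +infinity *)
Definition Hband n (x : 'S_n) (i : nat) : {set 'I_n} :=
  [set r : 'I_n | (nth 0 (lrmin_val x) i < x r) &&
     (if i is i'.+1 then val (x r) < nth 0 (lrmin_val x) i' else true)].

Definition cell n (x : 'S_n) (i j : nat) : {set 'I_n} :=
  Hband x i :&: Bblock x j.

(* Under 123-avoidance the entries that are not left-to-right minima decrease
   from left to right. Two entries lie in a common cell exactly when no
   left-to-right minimum lies between them, neither in position nor in value.
   An occurrence of 132* yields adjacent entries x_b = x_{b+1} + 1, neither of
   them a minimum, hence in one cell. Conversely, if p < q share a cell, the
   entry of value x_q + 1 lies between them in value, so it is not a minimum;
   decreasingness forces it to sit at position q - 1, and an earlier entry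
   smaller than x_q (q is not a minimum) completes an occurrence of 132*. *)
From mathcomp Require Import all_boot all_order all_fingroup zify.
Set Implicit Arguments. Unset Strict Implicit. Unset Printing Implicit Defensive.

Definition in_gap (s : seq nat) (N j t : nat) : bool :=
  (nth 0 s j < t) && (t < if j.+1 < size s then nth 0 s j.+1 else N).

Lemma in_gap_between s N j lo hi t :
  in_gap s N j lo -> in_gap s N j hi -> lo <= t <= hi -> in_gap s N j t.
Proof. by rewrite /in_gap; case: ifP => _; lia. Qed.

Section Gaps.
Variables (s : seq nat) (N : nat).
Hypothesis s_sorted : sorted ltn s.

Lemma in_gap_notin j t : j < size s -> in_gap s N j t -> t \notin s.
Proof.
have /andP[_ s_leq] : uniq s && sorted leq s by rewrite -ltn_sorted_uniq_leq.
have leq_nth := sorted_leq_nth leq_trans leqnn 0 s_leq.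
move=> lt_j_s /andP[lo_t t_hi]; apply/(nthP 0) => -[m lt_m_s def_t].
have lt_jm : j < m.
  rewrite ltnNge; apply: contraL lo_t => le_mj.
  by rewrite -def_t -leqNgt leq_nth.
move: t_hi; case: ifP => [lt_j1_s|/negP[]]; last exact: leq_ltn_trans lt_jm lt_m_s.
by rewrite -def_t ltnNge leq_nth.
Qed.

Lemma in_gap_exists y lo hi : y \in s -> y < lo -> lo <= hi -> hi < N ->
    (forall t, lo <= t <= hi -> t \notin s) ->
  exists2 j, j < size s & in_gap s N j lo && in_gap s N j hi.
Proof.
elim: s s_sorted y => [//|a r IH] sorted_ar y y_ar lt_y_lo le_lo_hi lt_hi_N free.
have lt_a_lo : a < lo.
  move: y_ar; rewrite inE => /predU1P[<- //|y_r].
  by apply: ltn_trans lt_y_lo; have /allP := order_path_min ltn_trans sorted_ar; apply.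
case: r {y_ar} IH sorted_ar free => [|b r] IH sorted_ar free.
  by exists 0; rewrite //= /in_gap /=; lia.
case: (ltnP hi b) => [lt_hi_b|le_b_hi].
  by exists 0; rewrite //= /in_gap /=; lia.
have lt_b_lo : b < lo.
  rewrite ltnNge; apply/negP => le_lo_b.
  by move: (free b); rewrite le_lo_b le_b_hi !inE eqxx orbT => /(_ isT).
have [|j lt_j_r gap_j] := IH (path_sorted sorted_ar) b (mem_head b r) lt_b_lo le_lo_hi lt_hi_N.
  by move=> t /free; rewrite inE negb_or => /andP[].
by exists j.+1.
Qed.

End Gaps.

Section LeftToRightMinima.
Variables (n : nat) (x : 'S_n).
Local Notation k := (nb_lrmin x).

Lemma mem_lrmin_pos (t : 'I_n) : (val t \in lrmin_pos x) = is_lrmin x t.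
Proof. by rewrite (mem_map val_inj) mem_filter mem_enum andbT. Qed.

Lemma mem_lrmin_val (t : 'I_n) : (val (x t) \in lrmin_val x) = is_lrmin x t.
Proof.
have x_inj : injective (fun p : 'I_n => val (x p)) by move=> p q /val_inj/perm_inj.
by rewrite (mem_map x_inj) mem_filter mem_enum andbT.
Qed.

Lemma size_lrmin_val : size (lrmin_val x) = k.
Proof. by rewrite /nb_lrmin !size_map. Qed.

Lemma sorted_lrmin_pos : sorted ltn (lrmin_pos x).
Proof.
rewrite sorted_map; apply: sorted_filter; first exact: ltn_trans.
by rewrite -sorted_map val_enum_ord iota_ltn_sorted.
Qed.

Lemma sorted_rev_lrmin_val : sorted ltn (rev (lrmin_val x)).
Proof.
rewrite rev_sorted sorted_map.
apply: (@sub_in_sorted _ (is_lrmin x) (relpre val ltn)).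
- by move=> p q _ /forallP/(_ p)/implyP.
- exact: filter_all.
- apply: sorted_filter; first exact: ltn_trans.
  by rewrite -sorted_map val_enum_ord iota_ltn_sorted.
Qed.

Lemma mem_Bblock (t : 'I_n) j : (t \in Bblock x j) = in_gap (lrmin_pos x) n j t.
Proof. by rewrite inE. Qed.

(* The bands H_i are the gaps of the increasing sequence of minimum values,
   read in reverse order. *)
Lemma mem_Hband (t : 'I_n) i : i < k ->
  (t \in Hband x i) = in_gap (rev (lrmin_val x)) n (k.-1 - i) (x t).
Proof.
rewrite -size_lrmin_val inE /in_gap size_rev; set m := size _ => lt_i_m.
rewrite nth_rev; last by lia.
have -> : m - (m.-1 - i).+1 = i by lia.
case: i lt_i_m => [|i] lt_i_m.
  by rewrite subn0 prednK // ltnn ltn_ord andbT.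
rewrite ifT ?nth_rev; try lia.
by have -> : m - (m.-1 - i.+1).+2 = i by lia.
Qed.

Lemma is_lrmin_pos0 (t : 'I_n) : val t = 0 -> is_lrmin x t.
Proof. by move=> t0; apply/forallP => q; rewrite t0. Qed.

Lemma is_lrmin_val0 (t : 'I_n) : val (x t) = 0 -> is_lrmin x t.
Proof.
move=> xt0; apply/forallP => q; apply/implyP => lt_qt; rewrite xt0 lt0n.
apply: contraTneq lt_qt => xq0; rewrite (_ : q = t) ?ltnn //.
by apply/perm_inj/val_inj; exact: etrans xq0 (esym xt0).
Qed.

Lemma not_lrminP (t : 'I_n) :
  reflect (exists2 u : 'I_n, u < t & x u < x t) (~~ is_lrmin x t).
Proof.
apply: (iffP idP) => [|[u lt_ut lt_xu_xt]].
- rewrite negb_forall => /existsP[u]; rewrite negb_imply -leqNgt => /andP[lt_ut le_xu_xt].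
  exists u => //; rewrite ltn_neqAle le_xu_xt andbT.
  by apply: contraTneq lt_ut => /val_inj/perm_inj ->; rewrite ltnn.
- by apply/negP => /forallP/(_ u)/implyP/(_ lt_ut); rewrite ltnNge (ltnW lt_xu_xt).
Qed.

Lemma avoids123_not_lrmin_gt (p q : 'I_n) :
  avoids123 x -> ~~ is_lrmin x p -> p < q -> x q < x p.
Proof.
move=> x123 /not_lrminP[u lt_up lt_xu_xp] lt_pq; rewrite ltnNge leq_eqVlt.
apply/negP => /orP[/eqP/val_inj/perm_inj eq_pq|lt_xp_xq].
  by move: lt_pq; rewrite eq_pq ltnn.
by apply: x123; exists u, p, q.
Qed.

Lemma Bblock_not_lrmin j (p q t : 'I_n) : j < k ->
  p \in Bblock x j -> q \in Bblock x j -> p <= t <= q -> ~~ is_lrmin x t.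
Proof.
rewrite !mem_Bblock -mem_lrmin_pos => lt_jk p_j q_j le_ptq.
apply: (in_gap_notin sorted_lrmin_pos lt_jk).
exact: in_gap_between p_j q_j le_ptq.
Qed.

Lemma Hband_not_lrmin i (p q t : 'I_n) : i < k ->
  p \in Hband x i -> q \in Hband x i -> x q <= x t <= x p -> ~~ is_lrmin x t.
Proof.
move=> lt_ik; rewrite !mem_Hband // -mem_lrmin_val -mem_rev => p_i q_i le_xt.
apply: (in_gap_notin sorted_rev_lrmin_val); last exact: in_gap_between q_i p_i le_xt.
by rewrite size_rev size_lrmin_val; lia.
Qed.

Lemma common_Bblock (p q : 'I_n) : p <= q ->
    (forall t : 'I_n, p <= t <= q -> ~~ is_lrmin x t) ->
  exists2 j, j < k & (p \in Bblock x j) && (q \in Bblock x j).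
Proof.
move=> le_pq free; have n_gt0 : 0 < n := leq_ltn_trans (leq0n p) (ltn_ord p).
have zero_pos : 0 \in lrmin_pos x.
  by have := mem_lrmin_pos (Ordinal n_gt0); rewrite is_lrmin_pos0.
have p_gt0 : 0 < p.
  by rewrite lt0n (contraNneq (@is_lrmin_pos0 p)) // free // leqnn le_pq.
have [|j lt_jk gap_pq] := in_gap_exists sorted_lrmin_pos zero_pos p_gt0 le_pq (ltn_ord q).
  move=> t le_ptq; have lt_tn : t < n by apply: leq_ltn_trans (ltn_ord q); case/andP: le_ptq.
  by rewrite -[t]/(val (Ordinal lt_tn)) mem_lrmin_pos free.
by exists j; rewrite ?mem_Bblock.
Qed.

Lemma common_Hband (p q : 'I_n) : x q <= x p ->
    (forall t : 'I_n, x q <= x t <= x p -> ~~ is_lrmin x t) ->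
  exists2 i, i < k & (p \in Hband x i) && (q \in Hband x i).
Proof.
move=> le_xqp free; have n_gt0 : 0 < n := leq_ltn_trans (leq0n p) (ltn_ord p).
have zero_val : 0 \in rev (lrmin_val x).
  have := mem_lrmin_val ((x^-1)%g (Ordinal n_gt0)).
  by rewrite mem_rev permKV is_lrmin_val0 ?permKV.
have xq_gt0 : 0 < x q.
  by rewrite lt0n (contraNneq (@is_lrmin_val0 q)) // free // leqnn le_xqp.
have [|j lt_jk gap_qp] :=
    in_gap_exists sorted_rev_lrmin_val zero_val xq_gt0 le_xqp (ltn_ord (x p)).
  move=> v le_v; have lt_vn : v < n by apply: leq_ltn_trans (ltn_ord (x p)); case/andP: le_v.
  by have := free ((x^-1)%g (Ordinal lt_vn)); rewrite -mem_lrmin_val mem_rev !permKV; apply.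
rewrite size_rev size_lrmin_val in lt_jk.
exists (k.-1 - j); first lia.
by rewrite !mem_Hband ?subKn 1?andbC //; lia.
Qed.

Definition no_lrmin_between (p q : 'I_n) : Prop :=
  (forall t : 'I_n, p <= t <= q -> ~~ is_lrmin x t) /\
  (forall t : 'I_n, x q <= x t <= x p -> ~~ is_lrmin x t).

Lemma cell_no_lrmin_between i j (p q : 'I_n) : i < k -> j < k ->
  p \in cell x i j -> q \in cell x i j -> no_lrmin_between p q.
Proof.
move=> lt_ik lt_jk /setIP[p_i p_j] /setIP[q_i q_j]; split=> t.
- exact: Bblock_not_lrmin lt_jk p_j q_j.
- exact: Hband_not_lrmin lt_ik p_i q_i.
Qed.

Lemma no_lrmin_between_cell (p q : 'I_n) : p <= q -> x q <= x p ->
    no_lrmin_between p q ->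
  exists i j, [/\ i < k, j < k, p \in cell x i j & q \in cell x i j].
Proof.
move=> le_pq le_xqp [free_pos free_val].
have [j lt_jk /andP[p_j q_j]] := common_Bblock le_pq free_pos.
have [i lt_ik /andP[p_i q_i]] := common_Hband le_xqp free_val.
by exists i, j; split; rewrite // inE ?p_i ?q_i.
Qed.

Lemma occ132star_no_lrmin_between (a b : 'I_n) : occ132star x a b ->
  exists c : 'I_n, [/\ c = b.+1 :> nat, x c < x b & no_lrmin_between b c].
Proof.
case=> c [lt_ab def_c lt_xac def_xb]; rewrite /= in def_c def_xb.
exists c; split; rewrite ?def_xb //.
have [b_free c_free] : ~~ is_lrmin x b /\ ~~ is_lrmin x c.
  by split; apply/not_lrminP; exists a; rewrite // ?def_xb ?def_c; lia.
split=> t le_t.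
- by have [/val_inj ->|/val_inj ->] : t = b :> nat \/ t = c :> nat by lia.
- have [/val_inj/perm_inj ->|/val_inj/perm_inj ->] :
      x t = x b :> nat \/ x t = x c :> nat by lia.
    exact: b_free.
  exact: c_free.
Qed.

Lemma avoids123_occ132star (p q : 'I_n) : avoids123 x -> p < q ->
  no_lrmin_between p q -> exists a b, occ132star x a b.
Proof.
move=> x123 lt_pq [free_pos free_val].
have p_free : ~~ is_lrmin x p by apply: free_pos; rewrite leqnn ltnW.
have lt_xqp := avoids123_not_lrmin_gt x123 p_free lt_pq.
have lt_xq1_n : (x q).+1 < n := leq_ltn_trans lt_xqp (ltn_ord _).
pose t := (x^-1)%g (Ordinal lt_xq1_n).
have xt : x t = (x q).+1 :> nat by rewrite permKV.
have t_free : ~~ is_lrmin x t by apply: free_val; rewrite xt leqnSn.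
have q_free : ~~ is_lrmin x q by apply: free_pos; rewrite leqnn ltnW.
have lt_tq : t < q.
  rewrite ltnNge leq_eqVlt; apply/negP => /orP[/eqP/val_inj eq_qt|lt_qt].
    by move: xt; rewrite -eq_qt => /n_Sn.
  by have := avoids123_not_lrmin_gt x123 q_free lt_qt; rewrite xt ltnNge leqnSn.
have lt_q1_n : q.-1 < n := leq_ltn_trans (leq_pred q) (ltn_ord q).
pose b : 'I_n := Ordinal lt_q1_n.
have def_q : q = b.+1 :> nat by rewrite /= prednK // (leq_ltn_trans _ lt_pq).
have b_free : ~~ is_lrmin x b by apply: free_pos; rewrite /=; lia.
have lt_xqb : x q < x b by apply: avoids123_not_lrmin_gt x123 b_free _; rewrite def_q.
have eq_tb : t = b :> nat.
  apply/eqP; rewrite eqn_leq -ltnS -def_q lt_tq andTb leqNgt.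
  apply/negP => lt_tb; have := avoids123_not_lrmin_gt x123 t_free lt_tb.
  by rewrite xt ltnS leqNgt lt_xqb.
have xb : x b = (x q).+1 :> nat by rewrite -xt (val_inj eq_tb).
have /not_lrminP[u lt_uq lt_xuq] := q_free.
exists u, b, q; split => //.
rewrite ltn_neqAle -ltnS -def_q lt_uq andbT.
by apply: contraTneq lt_xuq => /val_inj ->; rewrite xb; lia.
Qed.

End LeftToRightMinima.

Theorem proposition3p21 (n : nat) (x : 'S_n) :
  avoids123 x ->
  (avoids132star x <->
   (forall i j : nat, i < nb_lrmin x -> j < nb_lrmin x -> #|cell x i j| <= 1)).
Proof.
move=> x123; split=> [x132 i j lt_ik lt_jk | small_cells a b occ_ab].
- rewrite leqNgt; apply/card_gt1P => -[p [q [p_ij q_ij neq_pq]]].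
  wlog lt_pq : p q p_ij q_ij {neq_pq} / p < q.
    move=> wlog; case: (ltngtP p q) => [lt_pq|lt_qp|/val_inj eq_pq].
    + exact: wlog p_ij q_ij lt_pq.
    + exact: wlog q_ij p_ij lt_qp.
    + by rewrite eq_pq eqxx in neq_pq.
  have no_min := cell_no_lrmin_between lt_ik lt_jk p_ij q_ij.
  by have [a [b]] := avoids123_occ132star x123 lt_pq no_min; apply: x132.
- have [c [def_c lt_xcb free]] := occ132star_no_lrmin_between occ_ab.
  have le_bc : b <= c by rewrite def_c.
  have [i [j [lt_ik lt_jk b_ij c_ij]]] := no_lrmin_between_cell le_bc (ltnW lt_xcb) free.
  have := small_cells i j lt_ik lt_jk; apply/negP; rewrite -ltnNge.
  apply/card_gt1P; exists b, c; split=> //.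
  by apply/eqP => eq_bc; move: def_c; rewrite eq_bc => /n_Sn.
Qed.
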